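(* Let $P=\{p_1,\dots,p_n\}$ be weighted points in $\mathbb{R}^d$ with total weight $1$, let $S=\{s_1,\dots,s_m\}$ be $d$-dimensional simplices in $\mathbb{R}^d$ of total volume $1$ with longest edge length $\Delta$, and let $0<\delta\le\frac15$. Let $\tau$ be the transport plan produced by the construction in the context and $\tau^*$ an optimal transport plan between $P$ and $S$. Then $\|\tau\|\le(1+21\delta)\|\tau^*\|$.
   Context: Each simplex's mass equals its volume and is spread uniformly with a common density. A transport plan moves from each point its weight and delivers to the simplices exactly their mass distribution; its cost $\|\tau\|$ is the integral of moved mass times Euclidean distance; $\|\tau^*\|$ is the minimum cost. Construction: (1) Overlay a uniform grid of cubes of side $\Delta$ and keep the cells intersected by some simplex. (2) Repeatedly subdivide each cell into $2^d$ equal subcubes until, for every point of $P$, the ratio of the distances to the furthest and closest point of the cell is at most $1+\delta$, or until the cell lies wholly within Euclidean distance $\delta/(nm)^{1/d}$ of some point of $P$. Let $Q$ be the resulting cells. (3) In each $q\in Q$ pick an arbitrary point with weight equal to the total volume of simplices contained in $q$; call this set $T$. (4) Compute an optimal transport plan $\nu$ between $P$ and $T$. (5) Obtain $\tau$ by spreading the mass sent by $\nu$ to each $t\in T$ uniformly over the parts of simplices contained in the cell from which $t$ was chosen. *)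

From HB Require Import structures.
From mathcomp Require Import all_boot all_order all_algebra.
From mathcomp Require Import all_classical all_reals all_analysis.
Set Implicit Arguments. Unset Strict Implicit. Unset Printing Implicit Defensive.
Import Order.TTheory GRing.Theory Num.Theory.
Local Open Scope classical_set_scope.
Local Open Scope ring_scope.

Section Defs.
Variables (R : realType) (d : nat).

Definition Rd := d.-tuple R.

Definition edist (x y : Rd) : R :=
  Num.sqrt (\sum_(i < d) (tnth x i - tnth y i) ^+ 2).

Definition closed_box (a b : Rd) : set Rd :=
  [set x | forall i, tnth a i <= tnth x i <= tnth b i].

Definition simplex_hull (v : 'I_d.+1 -> Rd) : set Rd :=
  [set x | exists lam : 'I_d.+1 -> R,
     (forall k, 0 <= lam k) /\ \sum_k lam k = 1 /\
     forall i, tnth x i = \sum_k lam k * tnth (v k) i].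

Definition full_dim_simplex (v : 'I_d.+1 -> Rd) : Prop :=
  \det (\matrix_(k < d, i < d) (tnth (v (lift ord0 k)) i - tnth (v ord0) i))
    != 0.

Definition longest_edge m (S : 'I_m -> 'I_d.+1 -> Rd) : R :=
  \big[Num.max/0]_(j < m) \big[Num.max/0]_(k < d.+1)
     \big[Num.max/0]_(k' < d.+1) edist (S j k) (S j k').

(* Cells of the (dyadically refined) grid of side Delta with origin o:
   the index (l, z) denotes the closed cube of side Delta / 2^l with lower
   corner o + (Delta / 2^l) z. Level 0 cells are the cells of the initial
   uniform grid; level l cells are those obtained after l subdivisions. *)
Definition cellidx := (nat * d.-tuple int)%type.

Definition grid_cell (o : Rd) (Delta : R) (c : cellidx) : set Rd :=
  [set x | forall i,
     tnth o i + Delta / 2 ^+ c.1 * (tnth c.2 i)%:~R <= tnth x i <=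
     tnth o i + Delta / 2 ^+ c.1 * ((tnth c.2 i)%:~R + 1)].

Definition stop_crit n (P : 'I_n -> Rd) (delta rad : R) (X : set Rd) :=
  (forall i x y, X x -> X y -> edist (P i) x <= (1 + delta) * edist (P i) y)
  \/ (exists i, forall x, X x -> edist x (P i) <= rad).

(* Membership in the final set of cells Q produced by steps (1)-(2):
   c is a dyadic grid_cell whose level-0 ancestor meets some simplex_hull, which
   satisfies the stopping criterion while none of its ancestors does. *)
Definition in_Q n m (P : 'I_n -> Rd) (S : 'I_m -> 'I_d.+1 -> Rd)
  (o : Rd) (Delta delta rad : R) (c : cellidx) : Prop :=
  (exists z0 : d.-tuple int,
     grid_cell o Delta c `<=` grid_cell o Delta (0%N, z0) /\
     exists j, grid_cell o Delta (0%N, z0) `&` simplex_hull (S j) !=set0)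
  /\ stop_crit P delta rad (grid_cell o Delta c)
  /\ (forall (l' : nat) (z' : d.-tuple int), (l' < c.1)%N ->
        grid_cell o Delta c `<=` grid_cell o Delta (l', z') ->
        ~ stop_crit P delta rad (grid_cell o Delta (l', z'))).

(* Lebesgue measure on R^d (characterised by its values on boxes; this
   determines it on the (Borel) sigma-algebra of d.-tuple R). *)
Definition is_lebesgue (lam : {measure set Rd -> \bar R}) : Prop :=
  forall a b : Rd, (forall i, tnth a i <= tnth b i) ->
    lam (closed_box a b) = (\prod_(i < d) (tnth b i - tnth a i))%:E.

(* A transport plan from the weighted points (P, w) to the simplices S,
   each simplex_hull carrying mass equal to its volume, spread uniformly:
   mu i is the mass distribution sent from P i. *)
Definition transport_plan n m (lam : {measure set Rd -> \bar R})
  (P : 'I_n -> Rd) (w : 'I_n -> R) (S : 'I_m -> 'I_d.+1 -> Rd)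
  (mu : 'I_n -> {measure set Rd -> \bar R}) : Prop :=
  (forall i, mu i setT = (w i)%:E) /\
  (forall A, measurable A ->
     (\sum_(i < n) mu i A = \sum_(j < m) lam (A `&` simplex_hull (S j)))%E).

Definition plan_cost n (P : 'I_n -> Rd)
  (mu : 'I_n -> {measure set Rd -> \bar R}) : \bar R :=
  (\sum_(i < n) \int[mu i]_x (edist x (P i))%:E)%E.

Definition discrete_plan n (w : 'I_n -> R) (Q : seq cellidx)
  (W : cellidx -> R) (nu : 'I_n -> cellidx -> R) : Prop :=
  (forall i q, 0 <= nu i q) /\
  (forall i, \sum_(q <- Q) nu i q = w i) /\
  (forall q, q \in Q -> \sum_(i < n) nu i q = W q).

Definition discrete_cost n (P : 'I_n -> Rd) (Q : seq cellidx)
  (t : cellidx -> Rd) (nu : 'I_n -> cellidx -> R) : R :=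
  \sum_(i < n) \sum_(q <- Q) nu i q * edist (P i) (t q).

End Defs.

From Pilot Require Import Defs.
From HB Require Import structures.
From mathcomp Require Import all_boot all_order all_algebra.
From mathcomp Require Import all_classical all_reals all_analysis.
From mathcomp Require Import measurable_realfun ring lra zify.
Import Order.TTheory GRing.Theory Num.Theory.
Set Implicit Arguments. Unset Strict Implicit. Unset Printing Implicit Defensive.
Local Open Scope classical_set_scope.
Local Open Scope ring_scope.

(* A cell of Q either passes the ratio test, so that distances from any point of P to
   its points agree up to the factor 1 + delta, or lies within rad of a point of P, so
   that they agree up to an additive 2 rad.  Cutting the cells into a.e. disjoint pieces,
   any plan sigma induces a discrete plan between P and T; comparing it with the optimal
   nu gives
     cost tau <= (1 + delta) cost nu + 2 rad N <= (1 + delta)^2 cost sigma + (2 + delta) 2 rad N,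
   where N is the mass of the cells failing the ratio test.  That mass lies in the n boxes
   of side 2 rad around the points of P, hence N <= n m (2 rad)^d = (2 delta)^d <= 2 delta,
   while the mass outside these boxes is at distance at least rad from P, so that
   cost sigma >= rad (1 - 2 delta).  Thus rad N = O(delta cost sigma), and the constants
   add up to 21. *)

(* MathComp-Analysis also exports an [edist] (extended distance of pseudometric spaces). *)
Local Notation edist := Defs.edist.

Lemma cauchy_schwarz (R : rcfType) (I : finType) (a b : I -> R) :
  \sum_i a i * b i <= Num.sqrt (\sum_i a i ^+ 2) * Num.sqrt (\sum_i b i ^+ 2).
Proof.
set A := \sum_i a i ^+ 2; set B := \sum_i b i ^+ 2; set C := \sum_i a i * b i.
have A0 : 0 <= A by rewrite sumr_ge0 // => i _; rewrite sqr_ge0.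
have lagrange : \sum_i \sum_j (a i * b j - a j * b i) ^+ 2 = 2 * (A * B - C ^+ 2).
  have AB : A * B = \sum_i \sum_j a i ^+ 2 * b j ^+ 2.
    by rewrite mulr_suml; apply: eq_bigr => i _; rewrite mulr_sumr.
  have C2 : C ^+ 2 = \sum_i \sum_j (a i * b i) * (a j * b j).
    by rewrite expr2 mulr_suml; apply: eq_bigr => i _; rewrite mulr_sumr.
  transitivity (\sum_i \sum_j a i ^+ 2 * b j ^+ 2 + \sum_i \sum_j a j ^+ 2 * b i ^+ 2
                - 2 * \sum_i \sum_j (a i * b i) * (a j * b j)).
    rewrite mulr_sumr -big_split -sumrB /=; apply: eq_bigr => i _.
    rewrite mulr_sumr -big_split -sumrB /=; apply: eq_bigr => j _; ring.
  rewrite [X in _ + X - _]exchange_big /= -AB -C2; ring.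
have C2AB : C ^+ 2 <= A * B.
  rewrite -subr_ge0 -(@pmulr_rge0 _ 2) // -lagrange.
  by do 2![apply: sumr_ge0 => ? _]; rewrite sqr_ge0.
rewrite -sqrtrM // (le_trans (ler_norm C)) // -sqrtr_sqr ler_sqrt // mulr_ge0 //.
by rewrite sumr_ge0 // => i _; rewrite sqr_ge0.
Qed.

Section EuclideanDistance.
Variables (R : realType) (d : nat).
Implicit Types x y z : Rd R d.

Lemma edist_ge0 x y : 0 <= edist x y.
Proof. exact: sqrtr_ge0. Qed.

Lemma edistC x y : edist x y = edist y x.
Proof. by rewrite /edist; congr Num.sqrt; apply: eq_bigr => i _; rewrite -sqrrN opprB. Qed.

Lemma coord_le_edist x y i : `|tnth x i - tnth y i| <= edist x y.
Proof.
rewrite -sqrtr_sqr ler_sqrt; last by rewrite sumr_ge0 // => j _; rewrite sqr_ge0.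
by rewrite (bigD1 i) //= lerDl sumr_ge0 // => j _; rewrite sqr_ge0.
Qed.

Lemma edist_triangle x y z : edist x z <= edist x y + edist y z.
Proof.
rewrite /edist; set a := fun i => tnth x i - tnth y i; set b := fun i => tnth y i - tnth z i.
have sq_ge0 (c : 'I_d -> R) : 0 <= \sum_i c i ^+ 2 by rewrite sumr_ge0 // => i _; rewrite sqr_ge0.
have -> : \sum_i (tnth x i - tnth z i) ^+ 2 =
          \sum_i a i ^+ 2 + 2 * \sum_i a i * b i + \sum_i b i ^+ 2.
  by rewrite mulr_sumr -!big_split /=; apply: eq_bigr => i _; rewrite /a /b; ring.
rewrite -[leRHS]ger0_norm ?addr_ge0 ?edist_ge0 // -sqrtr_sqr ler_sqrt ?sqr_ge0 //.
rewrite sqrrD !sqr_sqrtr ?sq_ge0 // lerD2r lerD2l.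
have := cauchy_schwarz a b; rewrite -mulr_natl; nra.
Qed.

Lemma edist_le_coord x y (h : R) : 0 <= h ->
  (forall i, `|tnth x i - tnth y i| <= h) -> edist x y <= d%:R * h.
Proof.
move=> h0 xy_h; rewrite -[leRHS]ger0_norm ?mulr_ge0 // -sqrtr_sqr ler_sqrt ?sqr_ge0 //.
apply: (@le_trans _ _ (\sum_(i < d) h ^+ 2)).
  by apply: ler_sum => i _; rewrite -real_normK ?num_real // lerXn2r ?nnegrE.
rewrite sumr_const card_ord exprMn -[h ^+ 2 *+ d]mulr_natl ler_wpM2r ?sqr_ge0 //.
by case: d => [|k]; rewrite ?expr0n // -natrX ler_nat expnS leq_pmulr.
Qed.

End EuclideanDistance.

Section Measurability.
Variables (R : realType) (d : nat).
Local Notation Rd := (Rd R d).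

Lemma measurable_box (a b : 'I_d -> R) :
  measurable [set x : Rd | forall i, a i <= tnth x i <= b i].
Proof.
have -> : [set x : Rd | forall i, a i <= tnth x i <= b i] =
   \bigcap_(i in [set: 'I_d]) ((fun x : Rd => tnth x i) @^-1` [set` `[a i, b i]]).
  apply/seteqP; split => x /= H i; last by have := H i I; rewrite /= in_itv.
  by move=> _ /=; rewrite in_itv; exact: H.
apply: fin_bigcap_measurable => [|i _]; first exact: finite_finset.
by rewrite -[_ @^-1` _]setTI; exact: measurable_tnth.
Qed.

Lemma measurable_closed_box (a b : Rd) : measurable (closed_box a b).
Proof. exact: measurable_box. Qed.

Lemma measurable_grid_cell (o : Rd) (D : R) (c : cellidx d) :
  measurable (grid_cell o D c).
Proof. exact: measurable_box. Qed.

Lemma measurable_edist (p : Rd) : measurable_fun setT (fun x : Rd => edist x p).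
Proof.
apply: measurableT_comp; first exact: continuous_measurable_fun (@sqrt_continuous R).
apply: measurable_sum => i; apply: measurable_funX.
by apply: measurable_funB; [exact: measurable_tnth | exact: measurable_cst].
Qed.

Lemma measurable_EFin_edist (p : Rd) : measurable_fun setT (fun x => (edist x p)%:E : \bar R).
Proof. by apply/measurable_EFinP; exact: measurable_edist. Qed.

End Measurability.

Section SimplexHull.
Variables (R : realType) (d : nat) (v : 'I_d.+1 -> Rd R d).
Hypothesis v_full : full_dim_simplex v.

Let edges : 'M[R]_d := \matrix_(k, i) (tnth (v (lift ord0 k)) i - tnth (v ord0) i).

Definition simplex_coords (x : Rd R d) : 'rV[R]_d :=
  \row_i (tnth x i - tnth (v ord0) i) *m invmx edges.

Lemma simplex_hullE : simplex_hull v =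
  [set x | (forall k, 0 <= simplex_coords x 0 k) /\ \sum_k simplex_coords x 0 k <= 1].
Proof.
have edges_unit : edges \in unitmx by rewrite unitmxE unitfE.
apply/seteqP; split => x /=.
  move=> [lam [lam_ge0 [lam_sum1 xE]]].
  pose mu : 'rV[R]_d := \row_k lam (lift ord0 k).
  have lam0 : lam ord0 = 1 - \sum_k mu 0 k.
    by rewrite -lam_sum1 big_ord_recl; under [X in _ - X]eq_bigr do rewrite mxE; rewrite addrK.
  have -> : simplex_coords x = mu.
    rewrite /simplex_coords -[mu](mulmxK edges_unit); congr (_ *m _).
    apply/rowP => i; rewrite !mxE xE big_ord_recl lam0.
    have -> : \sum_j mu 0 j * edges j i = \sum_k lam (lift ord0 k) * tnth (v (lift ord0 k)) i
                                        - (\sum_k mu 0 k) * tnth (v ord0) i.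
      by rewrite mulr_suml -sumrB; apply: eq_bigr => k _; rewrite !mxE; ring.
    ring.
  split => [k|]; first by rewrite mxE.
  by rewrite -subr_ge0 -lam0.
move=> [mu_ge0 mu_le1].
set mu := simplex_coords x in mu_ge0 mu_le1.
exists (fun k => if unlift ord0 k is Some k' then mu 0 k' else 1 - \sum_k mu 0 k).
split; [|split].
- by move=> k; case: unliftP => [k' _|_]; rewrite ?subr_ge0.
- rewrite big_ord_recl unlift_none [X in _ + X](eq_bigr (fun k : 'I_d => mu 0 k)) ?subrK // => k _.
  by rewrite liftK.
- move=> i; rewrite big_ord_recl unlift_none.
  rewrite [X in _ + X](eq_bigr (fun k : 'I_d => mu 0 k * tnth (v (lift ord0 k)) i)) => [|k _];
    last by rewrite liftK.
  have coordsE : \sum_j mu 0 j * edges j i = tnth x i - tnth (v ord0) i.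
    by have /rowP/(_ i) := mulmxKV edges_unit (\row_i (tnth x i - tnth (v ord0) i)); rewrite !mxE.
  rewrite -[tnth x i](subrK (tnth (v ord0) i)) -coordsE.
  have -> : \sum_j mu 0 j * edges j i = \sum_k mu 0 k * tnth (v (lift ord0 k)) i
                                      - (\sum_k mu 0 k) * tnth (v ord0) i.
    by rewrite mulr_suml -sumrB; apply: eq_bigr => k _; rewrite [edges _ _]mxE mulrBr.
  ring.
Qed.

Lemma measurable_simplex_coord k : measurable_fun setT (fun x => simplex_coords x 0 k).
Proof.
rewrite /simplex_coords; under eq_fun do rewrite mxE.
apply: measurable_sum => i; under eq_fun do rewrite mxE.
apply: measurable_funM; last exact: measurable_cst.
by apply: measurable_funB; [exact: measurable_tnth | exact: measurable_cst].
Qed.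

Lemma measurable_simplex_hull : measurable (simplex_hull v).
Proof.
rewrite simplex_hullE.
have -> : [set x | (forall k, 0 <= simplex_coords x 0 k) /\ \sum_k simplex_coords x 0 k <= 1] =
  \bigcap_(k in [set: 'I_d]) ((fun x => simplex_coords x 0 k) @^-1` [set` `[0, +oo[])
  `&` (fun x => \sum_k simplex_coords x 0 k) @^-1` [set` `]-oo, 1]].
  apply/seteqP; split => x /= [H1 H2]; split.
  - by move=> k _; rewrite /= in_itv /= H1.
  - by rewrite /= in_itv.
  - by move=> k; have := H1 k I; rewrite /= in_itv /= andbT.
  - by move: H2; rewrite /= in_itv.
apply: measurableI.
  apply: fin_bigcap_measurable => [|k _]; first exact: finite_finset.
  by rewrite -[_ @^-1` _]setTI; exact: measurable_simplex_coord.
have msum : measurable_fun setT (fun x => \sum_k simplex_coords x 0 k).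
  by apply: measurable_sum => k; exact: measurable_simplex_coord.
by rewrite -[_ @^-1` _]setTI; exact: msum measurableT _ (measurable_itv _).
Qed.

End SimplexHull.

Lemma longest_edge_gt0 (R : realType) (d m : nat) (S : 'I_m -> 'I_d.+1 -> Rd R d) :
  (0 < d)%N -> (0 < m)%N -> (forall j, full_dim_simplex (S j)) -> 0 < longest_edge S.
Proof.
move=> d_gt0 m_gt0 S_full; pose j0 := Ordinal m_gt0.
have [k [i ki_neq0]] : exists k i, tnth (S j0 (lift ord0 k)) i - tnth (S j0 ord0) i != 0.
  apply/not_existsP => edges0; move: (S_full j0); rewrite /full_dim_simplex.
  set E := \matrix_(k, i) _; suff -> : E = 0 by rewrite -(prednK d_gt0) det0 eqxx.
  apply/matrixP => k i; rewrite !mxE; apply/eqP/negPn/negP => ki_neq0.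
  by apply: (edges0 k); exists i.
have edge_gt0 : 0 < edist (S j0 (lift ord0 k)) (S j0 ord0).
  by apply: lt_le_trans (coord_le_edist _ _ i); rewrite normr_gt0.
apply: lt_le_trans edge_gt0 _; apply: le_trans (le_bigmax _ _ j0).
by apply: le_trans (le_bigmax _ _ (lift ord0 k)); exact: (le_bigmax _ _ ord0).
Qed.

Section LebesgueBox.
Variables (R : realType) (d : nat) (lam : {measure set (Rd R d) -> \bar R}).
Hypothesis lamL : is_lebesgue lam.

Lemma lebesgue_hyperplane0 (a b : Rd R d) i c (A : set (Rd R d)) : measurable A ->
  (forall j, tnth a j <= tnth b j) -> A `<=` closed_box a b -> A `<=` [set x | tnth x i = c] ->
  lam A = 0%E.
Proof.
move=> mA ab Aab Ac; pose pin (e : Rd R d) := [tuple if j == i then c else tnth e j | j < d].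
have pin_le j : tnth (pin a) j <= tnth (pin b) j by rewrite !tnth_mktuple; case: eqP.
apply/eqP; rewrite -measure_le0 (@le_trans _ _ (lam (closed_box (pin a) (pin b)))) //.
  apply: le_measure; rewrite ?inE //; first exact: measurable_closed_box.
  move=> x Ax j; rewrite !tnth_mktuple; case: eqP => [->|_]; last exact: Aab.
  by rewrite (Ac x Ax) lexx.
by rewrite lamL // (bigD1 i) //= !tnth_mktuple eqxx subrr mul0r.
Qed.

End LebesgueBox.

Section DyadicGrid.
Variables (R : realType) (d : nat) (o : Rd R d) (D : R).
Hypothesis D_gt0 : 0 < D.
Local Notation cell := (grid_cell o D).

Definition side (l : nat) : R := D / 2 ^+ l.

Lemma side_gt0 l : 0 < side l.
Proof. by rewrite divr_gt0 // exprn_gt0. Qed.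

Lemma side_refine l k (a : int) : side l * a%:~R = side (l + k) * (a * 2 ^+ k)%:~R.
Proof.
by rewrite /side intrM rmorphXn /= exprD; field; rewrite !expf_neq0.
Qed.

Lemma side_refine_le l k (a b : int) :
  (side l * a%:~R <= side (l + k) * b%:~R) = (a * 2 ^+ k <= b).
Proof. by rewrite (side_refine l k) ler_pM2l ?side_gt0 // ler_int. Qed.

Lemma side_refine_ge l k (a b : int) :
  (side (l + k) * b%:~R <= side l * a%:~R) = (b <= a * 2 ^+ k).
Proof. by rewrite (side_refine l k) ler_pM2l ?side_gt0 // ler_int. Qed.

Lemma grid_cellE l z x : cell (l, z) x <->
  forall i, side l * (tnth z i)%:~R <= tnth x i - tnth o i <= side l * ((tnth z i)%:~R + 1).
Proof. by split => H i; have /andP[] := H i; rewrite /side => *; apply/andP; split; lra. Qed.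

Definition cell_lo (c : cellidx d) : Rd R d :=
  [tuple tnth o i + D / 2 ^+ c.1 * (tnth c.2 i)%:~R | i < d].
Definition cell_hi (c : cellidx d) : Rd R d :=
  [tuple tnth o i + D / 2 ^+ c.1 * ((tnth c.2 i)%:~R + 1) | i < d].

Lemma grid_cell_box c : cell c = closed_box (cell_lo c) (cell_hi c).
Proof. by apply/seteqP; split => x H i; have := H i; rewrite !tnth_mktuple. Qed.

Lemma cell_lo_le_hi c i : tnth (cell_lo c) i <= tnth (cell_hi c) i.
Proof. by rewrite !tnth_mktuple lerD2l ler_pM2l ?lerDl // (side_gt0 c.1). Qed.

Definition dyadic_sub k (z z' : d.-tuple int) :=
  forall i, tnth z i * 2 ^+ k <= tnth z' i /\ tnth z' i + 1 <= (tnth z i + 1) * 2 ^+ k.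

Lemma grid_cell_sub l k z z' : dyadic_sub k z z' -> cell ((l + k)%N, z') `<=` cell (l, z).
Proof.
move=> zz' x /grid_cellE x_in; apply/grid_cellE => i.
have [lo hi] := zz' i; have /andP[x_lo x_hi] := x_in i.
rewrite -(side_refine_le l) in lo; rewrite -(side_refine_ge l) !intrD in hi.
by apply/andP; split; lra.
Qed.

Lemma grid_cell_sub_root l (z : d.-tuple int) :
  cell (l, z) `<=` cell (0%N, [tuple (tnth z i %/ 2 ^+ l)%Z | i < d]).
Proof.
apply: (@grid_cell_sub 0 l) => i; rewrite tnth_mktuple.
have t_gt0 : (0 : int) < 2 ^+ l by rewrite exprn_gt0.
have := divz_eq (tnth z i) (2 ^+ l); have := modz_ge0 (tnth z i) (lt0r_neq0 t_gt0).
have := ltz_pmod (tnth z i) t_gt0; rewrite mulrDl mul1r.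
set q := (tnth z i %/ 2 ^+ l)%Z; set r := (tnth z i %% 2 ^+ l)%Z; set t := 2 ^+ l.
set qt := q * t; lia.
Qed.

Lemma grid_cell_floor l (x : Rd R d) :
  cell (l, [tuple Num.floor ((tnth x i - tnth o i) / side l) | i < d]) x.
Proof.
apply/grid_cellE => i; rewrite tnth_mktuple.
have s_gt0 := side_gt0 l; set y := (tnth x i - tnth o i) / side l.
have y_ge := floor_le y; have y_lt := floorD1_gt y; rewrite intrD in y_lt.
by apply/andP; split; rewrite mulrC; [rewrite -ler_pdivlMr | rewrite -ler_pdivrMr // ltW].
Qed.

Lemma edist_grid_cell l z x y : cell (l, z) x -> cell (l, z) y ->
  edist x y <= d%:R * side l.
Proof.
move=> /grid_cellE x_in /grid_cellE y_in; apply: edist_le_coord => [|i].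
  exact/ltW/side_gt0.
have /andP[? ?] := x_in i; have /andP[? ?] := y_in i.
by rewrite ler_norml; apply/andP; split; lra.
Qed.

Lemma exists_side_le (e : R) : 0 < e -> exists l, d%:R * side l <= e.
Proof.
move=> e_gt0; have K_ge0 : 0 <= d%:R * D / e by rewrite divr_ge0 ?mulr_ge0 // ltW.
exists (Num.Def.archi_bound (d%:R * D / e)).
set N := Num.Def.archi_bound _; have := archi_boundP K_ge0; rewrite -/N => N_gt.
have N_le : (N%:R : R) <= 2 ^+ N by rewrite -natrX ler_nat ltnW // ltn_expl.
rewrite /side mulrA ler_pdivrMr ?exprn_gt0 //.
rewrite ltr_pdivrMr // in N_gt; nra.
Qed.

Lemma grid_cells_meet_hyperplane l k z z' : ~ dyadic_sub k z z' ->
  exists i c, cell (l, z) `&` cell ((l + k)%N, z') `<=` [set x | tnth x i = c].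
Proof.
move=> not_nested.
have [i sep] : exists i, tnth z' i + 1 <= tnth z i * 2 ^+ k \/ (tnth z i + 1) * 2 ^+ k <= tnth z' i.
  apply/not_existsP => nsep; apply: not_nested => i.
  by have := nsep i; rewrite mulrDl mul1r; set a := tnth z i * _; lia.
case: sep => sep.
- exists i, (tnth o i + side l * (tnth z i)%:~R) => x [/grid_cellE x_in /grid_cellE x_in'].
  rewrite -(side_refine_ge l) intrD in sep.
  have /andP[? ?] := x_in i; have /andP[? ?] := x_in' i; rewrite /=; lra.
- exists i, (tnth o i + side l * ((tnth z i)%:~R + 1)) => x [/grid_cellE x_in /grid_cellE x_in'].
  rewrite -(side_refine_le l) intrD in sep.
  have /andP[? ?] := x_in i; have /andP[? ?] := x_in' i; rewrite /=; lra.
Qed.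

End DyadicGrid.

Section StoppedCells.
Variables (R : realType) (d n m : nat).
Variables (P : 'I_n -> Rd R d) (S : 'I_m -> 'I_d.+1 -> Rd R d) (o : Rd R d).
Variables (D delta rad : R).
Hypotheses (D_gt0 : 0 < D) (delta_gt0 : 0 < delta) (delta_le1 : delta <= 1) (rad_gt0 : 0 < rad).
Local Notation cell := (grid_cell o D).
Local Notation stop := (stop_crit P delta rad).
Local Notation in_Q := (in_Q P S o D delta rad).

(* Once the cell diameter is below [delta * rad / 4], a cell is either within
   [rad] of some point of [P] or far enough from all of them for the ratio test. *)
Lemma exists_stop_cell (x : Rd R d) : exists l z, cell (l, z) x /\ stop (cell (l, z)).
Proof.
have [l diam_le] : exists l, d%:R * side D l <= delta * rad / 4.
  by apply: exists_side_le; rewrite // divr_gt0 // mulr_gt0.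
exists l; eexists; split; first exact: grid_cell_floor.
set C := cell _.
have xC : C x by exact: grid_cell_floor.
have diam y z : C y -> C z -> edist y z <= delta * rad / 4.
  by move=> Cy Cz; apply: le_trans diam_le; exact: edist_grid_cell Cy Cz.
have delta_rad : delta * rad <= rad by rewrite ler_piMl // ltW.
have [[k xk]|far] := pselect (exists k, edist x (P k) <= rad / 2).
  right; exists k => y Cy.
  have := edist_triangle y x (P k); have := diam y x Cy xC; have := rad_gt0; lra.
left => i y z Cy Cz.
have xi : rad / 2 < edist x (P i) by rewrite ltNge; apply/negP => xi; apply: far; exists i.
have := edist_triangle (P i) z y; have := edist_triangle x z (P i).
have := diam z y Cz Cy; have := diam x z xC Cz; rewrite (edistC z (P i)) => xz zy xPi Piy.
have zPi : rad / 4 <= edist (P i) z by have := rad_gt0; lra.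
have : delta * (rad / 4) <= delta * edist (P i) z by rewrite ler_pM2l.
by have := rad_gt0; lra.
Qed.

Lemma exists_in_Q_cell (x : Rd R d) j : simplex_hull (S j) x -> exists c, in_Q c /\ cell c x.
Proof.
move=> Sx.
have stops : exists l, `[< exists z, cell (l, z) x /\ stop (cell (l, z)) >].
  by have [l [z lz]] := exists_stop_cell x; exists l; apply/asboolP; exists z.
case: (ex_minnP stops) => l /asboolP [z [xz stop_z]] l_min.
exists (l, z); split => //; split; [|split] => //.
- exists [tuple (tnth z i %/ 2 ^+ l)%Z | i < d]; split; first exact: grid_cell_sub_root.
  by exists j, x; split => //; exact: grid_cell_sub_root.
- move=> l' z' /= l'l sub stop'.
  have /l_min : `[< exists z, cell (l', z) x /\ stop (cell (l', z)) >].
    by apply/asboolP; exists z'; split => //; exact: sub.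
  by rewrite leqNgt l'l.
Qed.

End StoppedCells.

Section StoppedCellsOverlap.
Variables (R : realType) (d n m : nat).
Variables (P : 'I_n -> Rd R d) (S : 'I_m -> 'I_d.+1 -> Rd R d) (o : Rd R d).
Variables (D delta rad : R).
Hypothesis D_gt0 : 0 < D.
Local Notation cell := (grid_cell o D).
Local Notation in_Q := (in_Q P S o D delta rad).

Lemma in_Q_meet_hyperplane_le l k z z' : in_Q (l, z) -> in_Q ((l + k)%N, z') ->
  (l, z) <> ((l + k)%N, z') ->
  exists i e, cell (l, z) `&` cell ((l + k)%N, z') `<=` [set x | tnth x i = e].
Proof.
move=> [_ [stop_z _]] [_ [_ minimal]] neq; apply: (grid_cells_meet_hyperplane o D_gt0) => nested.
case: k nested minimal neq => [|k] nested minimal neq.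
  apply: neq; rewrite addn0; congr pair; apply: eq_from_tnth => i.
  by have := nested i; rewrite expr0 !mulr1; lia.
by apply: (minimal l z) => //=; [rewrite -[ltnLHS]addn0 ltn_add2l | exact: grid_cell_sub].
Qed.

Lemma in_Q_meet_hyperplane c c' : in_Q c -> in_Q c' -> c <> c' ->
  exists i e, cell c `&` cell c' `<=` [set x | tnth x i = e].
Proof.
case: c c' => [l z] [l' z'] Qc Qc' neq; case: (leqP l l') => [ll'|/ltnW l'l].
  by move: Qc' neq; rewrite -(subnKC ll'); exact: in_Q_meet_hyperplane_le.
move: Qc neq; rewrite -(subnKC l'l) setIC => Qc neq.
by apply: in_Q_meet_hyperplane_le => // e; apply: neq.
Qed.

End StoppedCellsOverlap.

Section Disjointify.
Variables (T : Type) (I : eqType) (s : seq I) (F : I -> set T).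

Definition disjointify (i : I) : set T :=
  F i `\` \bigcup_(j in [set` take (index i s) s]) F j.

Lemma disjointify_sub i : disjointify i `<=` F i.
Proof. by move=> x []. Qed.

Lemma trivIset_disjointify : trivIset [set` s] disjointify.
Proof.
move=> i j /= si sj [x [[Fx notFx] [Fx' notFx']]]; apply/eqP/negP => ij.
case: (ltngtP (index i s) (index j s)) => [lt_ij|lt_ji|eq_ij].
- by apply: notFx'; exists i; rewrite //= in_take.
- by apply: notFx; exists j; rewrite //= in_take.
- by move: ij; rewrite -(nth_index i si) eq_ij nth_index ?eqxx.
Qed.

Lemma bigcup_disjointify :
  \bigcup_(i in [set` s]) disjointify i = \bigcup_(i in [set` s]) F i.
Proof.
apply/seteqP; split => x [i si Fx]; first by exists i => //; exact: disjointify_sub.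
set p := fun j => `[< F j x >].
have has_x : has p s by apply/hasP; exists i => //; exact/asboolP.
have find_lt : (find p s < size s)%N by rewrite -has_find.
set j := nth i s (find p s).
exists j; first by rewrite /= mem_nth.
split; first exact/asboolP/(nth_find i has_x).
move=> [j' /= j'_before Fx']; have s_j' := mem_take j'_before.
rewrite in_take // in j'_before.
have := before_find i (leq_trans j'_before (index_nth i find_lt)).
by rewrite nth_index // /p => /negP; apply; exact/asboolP.
Qed.

End Disjointify.

Section MeasureDisjointify.
Context d (T : measurableType d) (R : realType) (I : choiceType).
Variables (mu : {measure set T -> \bar R}) (s : seq I) (F : I -> set T).
Hypothesis mF : forall i, measurable (F i).

Lemma measurable_disjointify i : measurable (disjointify s F i).
Proof. by apply: measurableD => //; apply: fin_bigcup_measurable => //; exact: finite_seq. Qed.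

Lemma measure_disjointify (A : set T) i : measurable A -> i \in s ->
  {in s &, forall j k, j != k -> mu (F j `&` F k) = 0%E} ->
  mu (A `&` F i) = mu (A `&` disjointify s F i).
Proof.
move=> mA si null.
set V := \bigcup_(j in [set` take (index i s) s]) F j.
have mV : measurable V by apply: fin_bigcup_measurable => //; exact: finite_seq.
have -> : A `&` F i = (A `&` disjointify s F i) `|` (A `&` F i `&` V).
  apply/seteqP; split => [x [Ax Fx]|x [[Ax [Fx _]]|[[Ax Fx] _]]] //.
  by have [Vx|nVx] := pselect (V x); [right|left].
apply: measureU0; first exact/measurableI/measurable_disjointify.
  by apply: measurableI => //; exact: measurableI.
apply/eqP; rewrite -measure_le0.
have sub : A `&` F i `&` V `<=` \bigcup_(j in [set` take (index i s) s]) (F i `&` F j).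
  by move=> x [[_ Fx] [j tj Fjx]]; exists j.
apply: le_trans (content_sub_fsum mu (finite_seq _) _ _ sub) _.
- by move=> j _; exact: measurableI.
- by apply: measurableI => //; exact: measurableI.
rewrite fsbig1 // => j /= tj; have sj := mem_take tj; rewrite in_take // in tj.
by apply: null => //; apply: contraTneq tj => <-; rewrite ltnn.
Qed.

End MeasureDisjointify.

Section MeasureSeq.
Context d (T : measurableType d) (R : realType) (I : choiceType).
Variables (mu : {measure set T -> \bar R}) (s : seq I) (A : I -> set T).
Hypotheses (mA : forall i, measurable (A i)) (s_uniq : uniq s).

Lemma measure_bigcup_seq : trivIset [set` s] A ->
  mu (\bigcup_(i in [set` s]) A i) = (\sum_(i <- s) mu (A i))%E.
Proof.
move=> A_triv; rewrite (fsbig_seq _ _ s_uniq).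
by apply: measure_fin_bigcup => //; exact: finite_seq.
Qed.

Lemma measure_bigcup_seq_le : (mu (\bigcup_(i in [set` s]) A i) <= \sum_(i <- s) mu (A i))%E.
Proof.
rewrite (fsbig_seq _ _ s_uniq); apply: (content_sub_fsum mu (finite_seq s)) => //.
by apply: fin_bigcup_measurable => //; exact: finite_seq.
Qed.

End MeasureSeq.

Section IntegralBounds.
Context d (T : measurableType d) (R : realType).
Variable mu : {measure set T -> \bar R}.
Local Open Scope ereal_scope.

Lemma integral_le_cst (A : set T) (f : T -> R) (c : R) : measurable A ->
  measurable_fun A f -> (forall x, A x -> 0 <= f x <= c)%R ->
  \int[mu]_(x in A) (f x)%:E <= c%:E * mu A.
Proof.
move=> mA mf f_bnd; rewrite -integral_cst //; apply: ge0_le_integral => //.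
- by move=> x Ax; have /andP[] := f_bnd x Ax.
- exact/measurable_EFinP.
- by move=> x Ax; have /andP[] := f_bnd x Ax.
Qed.

Lemma cst_le_integral (A : set T) (f : T -> R) (c : R) : measurable A ->
  measurable_fun A f -> (0 <= c)%R -> (forall x, A x -> c <= f x)%R ->
  c%:E * mu A <= \int[mu]_(x in A) (f x)%:E.
Proof.
move=> mA mf c_ge0 f_ge; rewrite -integral_cst //.
by apply: ge0_le_integral => //; exact/measurable_EFinP.
Qed.

Lemma integral_partition (I : choiceType) (s : seq I) (B : I -> set T) (f : T -> R) :
  (forall i, measurable (B i)) -> uniq s -> trivIset [set` s] B ->
  measurable_fun setT f -> (forall x, 0 <= f x)%R ->
  \int[mu]_x (f x)%:E = \sum_(i <- s) \int[mu]_(x in B i) (f x)%:E +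
                        \int[mu]_(x in ~` \bigcup_(i in [set` s]) B i) (f x)%:E.
Proof.
move=> mB s_uniq B_triv mf f_ge0.
set U := \bigcup_(i in [set` s]) B i.
have mU : measurable U by apply: fin_bigcup_measurable => //; exact: finite_seq.
have mfE : measurable_fun setT (fun x => (f x)%:E) by exact/measurable_EFinP.
rewrite -(setUv U) ge0_integral_setU //; first last.
- exact/disj_setPCl.
- by move=> x _; rewrite lee_fin.
- by rewrite setUv.
- exact: measurableC.
rewrite /U bigcup_seq ge0_integral_bigsetU //.
  by rewrite -bigcup_seq; exact: measurable_funS mfE.
by move=> x _; rewrite lee_fin.
Qed.

End IntegralBounds.

Lemma powR_invn_expr (R : realType) (x : R) k : 0 <= x -> (0 < k)%N ->
  (x `^ k%:R^-1) ^+ k = x.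
Proof.
move=> x_ge0 k_gt0; rewrite -powR_mulrn ?powR_ge0 // -powRrM mulVf ?powRr1 //.
by rewrite pnatr_eq0 -lt0n.
Qed.

Lemma sum_ord_neq0_gt0 (V : nmodType) n (F : 'I_n -> V) : \sum_(i < n) F i != 0 -> (0 < n)%N.
Proof. by case: n F => // F; rewrite big_ord0 eqxx. Qed.

Lemma approx_factor_arith (R : realFieldType) (delta rad C c N M : R) :
  0 < delta -> delta <= 1 / 5 -> 0 < rad -> 0 <= N -> N <= M -> M <= 2 * delta ->
  rad * (1 - M) <= C -> c <= (1 + delta) * C + 2 * rad * N ->
  (1 + delta) * c + 2 * rad * N <= (1 + 21 * delta) * C.
Proof.
move=> delta_gt0 delta_le rad_gt0 N_ge0 NM M_le radC cC.
have rad_le : rad <= 5 / 3 * C by nra.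
have C_ge0 : 0 <= C by nra.
have radN : rad * N <= 2 * delta * rad by nra.
have : delta * c <= delta * ((1 + delta) * C + 2 * rad * N) by rewrite ler_pM2l.
have : delta * (rad * N) <= delta * (2 * delta * rad) by rewrite ler_pM2l.
have : delta * rad <= delta * (5 / 3 * C) by rewrite ler_pM2l.
have : delta * delta * C <= delta * C / 5 by have := mulr_ge0 (ltW delta_gt0) C_ge0; nra.
nra.
Qed.

Section TransportBound.
Variables (R : realType) (d n m : nat).
Local Notation Rd := (Rd R d).
Variables (lam : {measure set Rd -> \bar R}) (P : 'I_n -> Rd) (w : 'I_n -> R)
  (S : 'I_m -> 'I_d.+1 -> Rd) (D delta rad : R) (o : Rd)
  (Q : seq (cellidx d)) (t : cellidx d -> Rd) (nu : 'I_n -> cellidx d -> R)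
  (tau sigma : 'I_n -> {measure set Rd -> \bar R}).
Hypotheses (lamL : is_lebesgue lam) (S_full : forall j, full_dim_simplex (S j))
  (D_gt0 : 0 < D) (delta_gt0 : 0 < delta) (delta_le1 : delta <= 1) (rad_gt0 : 0 < rad)
  (Q_uniq : uniq Q) (QE : forall c, c \in Q <-> in_Q P S o D delta rad c).

Local Notation cell := (grid_cell o D).
Local Notation hull j := (simplex_hull (S j)).

Definition covered := \bigcup_(q in [set` Q]) cell q.
Definition piece := disjointify Q cell.
Definition W q := fine (\sum_(j < m) lam (hull j `&` cell q))%E.

Lemma measurable_covered : measurable covered.
Proof.
by apply: fin_bigcup_measurable => [|q _]; [exact: finite_seq | exact: measurable_grid_cell].
Qed.

Lemma measurable_piece q : measurable (piece q).
Proof. exact: (measurable_disjointify Q (measurable_grid_cell o D)). Qed.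

Lemma hull_sub_covered j : hull j `<=` covered.
Proof.
move=> x /(exists_in_Q_cell P o D_gt0 delta_gt0 delta_le1 rad_gt0) [c [Qc cx]].
by exists c => //; exact/QE.
Qed.

Lemma lam_cellI0 q q' : q \in Q -> q' \in Q -> q != q' -> lam (cell q `&` cell q') = 0%E.
Proof.
move=> /QE Qq /QE Qq' /eqP neq.
have [i [e sub]] := in_Q_meet_hyperplane D_gt0 Qq Qq' neq.
apply: (lebesgue_hyperplane0 lamL _ (cell_lo_le_hi o D_gt0 q) _ sub).
- by apply: measurableI; exact: measurable_grid_cell.
- by move=> x [qx _]; rewrite -grid_cell_box.
Qed.

Lemma lam_piece (A : set Rd) q : measurable A -> q \in Q ->
  lam (A `&` cell q) = lam (A `&` piece q).
Proof.
move=> mA Qq; apply: measure_disjointify => // [|q1 q2 Qq1 Qq2]; first exact: measurable_grid_cell.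
exact: lam_cellI0.
Qed.

Lemma lam_cell_fin (A : set Rd) q : measurable A -> lam (A `&` cell q) \is a fin_num.
Proof.
move=> mA; rewrite ge0_fin_numE // (@le_lt_trans _ _ (lam (cell q))) //.
  apply: le_measure; rewrite ?inE; [|exact: measurable_grid_cell|by move=> x []].
  by apply: measurableI => //; exact: measurable_grid_cell.
by rewrite grid_cell_box lamL ?ltry // => i; exact: cell_lo_le_hi.
Qed.

Lemma WE q : (W q)%:E = (\sum_(j < m) lam (hull j `&` cell q))%E.
Proof.
rewrite fineK //; apply/sum_fin_numP => j _ _.
by apply: lam_cell_fin; exact: measurable_simplex_hull.
Qed.

Lemma W_piece q : q \in Q -> (W q)%:E = (\sum_(j < m) lam (hull j `&` piece q))%E.
Proof.
move=> Qq; rewrite WE; apply: eq_bigr => j _.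
by rewrite lam_piece //; exact: measurable_simplex_hull.
Qed.

Lemma W_ge0 q : 0 <= W q.
Proof. by rewrite fine_ge0 // sume_ge0. Qed.

Hypothesis nu_plan : discrete_plan w Q W nu.
Hypothesis tauE : forall i A, measurable A ->
  tau i A = (\sum_(q <- Q) ((nu i q / W q)%:E *
               \sum_(j < m) lam (A `&` hull j `&` cell q)))%E.

Lemma tau_piece i q : q \in Q -> tau i (piece q) = (nu i q)%:E.
Proof.
move=> Qq; have mpq := measurable_piece q.
rewrite tauE // (bigD1_seq q) //= [X in (_ + X)%E]big_seq_cond.
rewrite [X in (_ + X)%E]big1 ?adde0 => [|q' /andP[Qq' q'q]]; last first.
  rewrite big1 ?mule0 // => j _; apply: (subset_measure0 (B := cell q `&` cell q')).
  - apply: measurableI; last exact: measurable_grid_cell.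
    by apply: measurableI => //; exact: measurable_simplex_hull.
  - by apply: measurableI; exact: measurable_grid_cell.
  - by move=> x [[px _] q'x]; split => //; exact: disjointify_sub px.
  - by apply: lam_cellI0; rewrite // eq_sym.
have -> : (\sum_(j < m) lam (piece q `&` hull j `&` cell q))%E = (W q)%:E.
  rewrite W_piece //; apply: eq_bigr => j _; congr (lam _).
  apply/seteqP; split => [x [[px hx] _]|x [hx px]]; split => //.
  exact: disjointify_sub px.
rewrite -EFinM; congr (_%:E); have [W0|W0] := eqVneq (W q) 0; last by rewrite divfK.
(* An empty cell receives nothing from [nu], so the junk value [x / 0 = 0] is harmless. *)
case: nu_plan => nu_ge0 [_ nu_sum]; move: (nu_sum q Qq); rewrite W0 mulr0 => /eqP.
by rewrite psumr_eq0 // => /allP/(_ i (mem_index_enum i))/eqP.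
Qed.

Lemma tau_uncovered i : tau i (~` covered) = 0%E.
Proof.
rewrite tauE; last by apply: measurableC; exact: measurable_covered.
rewrite big_seq big1 // => q Qq; rewrite big1 ?mule0 // => j _.
rewrite (_ : _ `&` _ = set0) ?measure0 //.
by apply/seteqP; split => x // [[nx _] qx]; apply: nx; exists q.
Qed.

Hypothesis sigma_plan : transport_plan lam P w S sigma.

Lemma sigma_setT i : sigma i setT = (w i)%:E.
Proof. by case: sigma_plan. Qed.

Lemma sum_sigma A : measurable A ->
  (\sum_i sigma i A = \sum_(j < m) lam (A `&` hull j))%E.
Proof. by case: sigma_plan => _; apply. Qed.

Lemma sigma_fin_num i A : measurable A -> sigma i A \is a fin_num.
Proof.
move=> mA; rewrite ge0_fin_numE // (@le_lt_trans _ _ (sigma i setT)) ?le_measure ?inE //.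
by rewrite sigma_setT ltry.
Qed.

Lemma sigma_uncovered i : sigma i (~` covered) = 0%E.
Proof.
have mC : measurable (~` covered) by apply: measurableC; exact: measurable_covered.
apply/eqP; rewrite -measure_le0; apply: (@le_trans _ _ (\sum_k sigma k (~` covered))%E).
  by rewrite (bigD1 i) //= leeDl // sume_ge0.
rewrite sum_sigma // big1 // => j _; rewrite (_ : _ `&` _ = set0) ?measure0 //.
by apply/seteqP; split => x // [nx /hull_sub_covered].
Qed.

Lemma sum_sigma_piece i : (\sum_(q <- Q) sigma i (piece q) = (w i)%:E)%E.
Proof.
rewrite -measure_bigcup_seq //; last 2 first.
- exact: measurable_piece.
- exact: trivIset_disjointify.
rewrite bigcup_disjointify -/covered -sigma_setT -(setUv covered) measureU ?setICr //.
- by rewrite -[LHS]adde0; congr (_ + _)%E; apply/esym; exact: sigma_uncovered.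
- exact: measurable_covered.
- by apply: measurableC; exact: measurable_covered.
Qed.

Lemma sum_sigma_cell q : q \in Q -> (\sum_i sigma i (piece q) = (W q)%:E)%E.
Proof.
move=> Qq; rewrite sum_sigma ?W_piece //; last exact: measurable_piece.
by apply: eq_bigr => j _; rewrite setIC.
Qed.

Definition sigma_disc i q := fine (sigma i (piece q)).

Lemma sigma_discE i q : (sigma_disc i q)%:E = sigma i (piece q).
Proof. by rewrite fineK // sigma_fin_num //; exact: measurable_piece. Qed.

Lemma discrete_plan_sigma_disc : discrete_plan w Q W sigma_disc.
Proof.
split; [|split].
- by move=> i q; rewrite fine_ge0.
- move=> i; apply: EFin_inj; rewrite -sum_sigma_piece -sumEFin.
  by apply: eq_bigr => q _; rewrite sigma_discE.
- move=> q Qq; apply: EFin_inj; rewrite -sum_sigma_cell // -sumEFin.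
  by apply: eq_bigr => i _; rewrite sigma_discE.
Qed.

Hypothesis t_in : forall q, q \in Q -> cell q (t q).

Definition ratio_cell q := `[< forall i x y, cell q x -> cell q y ->
  edist (P i) x <= (1 + delta) * edist (P i) y >].

(* A cell failing the ratio test lies within [rad] of a point of [P] (by [stop_crit]), so
   distances from it agree up to [2 * rad]. *)
Definition slack q : R := if ratio_cell q then 0 else 2 * rad.

Lemma slack_cell_near q : q \in Q -> ~~ ratio_cell q ->
  exists k, forall y, cell q y -> edist y (P k) <= rad.
Proof. by move=> /QE [_ [[ratio|//] _]] /asboolPn; case. Qed.

Lemma edist_cell_le i q x : q \in Q -> cell q x ->
  edist x (P i) <= (1 + delta) * edist (P i) (t q) + slack q.
Proof.
move=> Qq qx; rewrite /slack; case: ifPn => [/asboolP ratio|near].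
  by rewrite addr0 edistC; apply: ratio => //; exact: t_in.
have [k near_k] := slack_cell_near Qq near.
have := edist_triangle x (P k) (t q); have := edist_triangle x (t q) (P i).
rewrite (edistC (t q) (P i)) (edistC (P k) (t q)).
have := near_k x qx; have := near_k _ (t_in Qq).
have := mulr_ge0 (ltW delta_gt0) (edist_ge0 (P i) (t q)); lra.
Qed.

Lemma edist_cell_ge i q x : q \in Q -> cell q x ->
  edist (P i) (t q) - slack q <= (1 + delta) * edist x (P i).
Proof.
move=> Qq qx; rewrite /slack; case: ifPn => [/asboolP ratio|near].
  by rewrite subr0 (edistC x); apply: ratio => //; exact: t_in.
have [k near_k] := slack_cell_near Qq near.
have := edist_triangle x (P k) (t q); have := edist_triangle (P i) x (t q).
rewrite (edistC (P i) x) (edistC (P k) (t q)).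
have := near_k x qx; have := near_k _ (t_in Qq).
have := mulr_ge0 (ltW delta_gt0) (edist_ge0 x (P i)); lra.
Qed.

Lemma integral_edist_pieces (mu : {measure set Rd -> \bar R}) i :
  mu (~` covered) = 0%E ->
  (\int[mu]_x (edist x (P i))%:E = \sum_(q <- Q) \int[mu]_(x in piece q) (edist x (P i))%:E)%E.
Proof.
move=> mu_uncovered.
rewrite (integral_partition mu measurable_piece Q_uniq (@trivIset_disjointify _ _ Q cell)
  (measurable_edist (P i)) (fun x => edist_ge0 x (P i))).
rewrite bigcup_disjointify -/covered null_set_integral ?adde0 //.
- by apply: measurableC; exact: measurable_covered.
- by apply: measurable_funS (measurable_EFin_edist (P i)).
Qed.

Lemma sum_slack_W_plan nu' : discrete_plan w Q W nu' ->
  \sum_(q <- Q) slack q * W q = \sum_(i < n) \sum_(q <- Q) slack q * nu' i q.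
Proof.
move=> [_ [_ nu'_sum]]; rewrite exchange_big /= !big_seq; apply: eq_bigr => q Qq.
by rewrite -mulr_sumr nu'_sum.
Qed.

Lemma plan_cost_tau_le : (plan_cost P tau <=
  ((1 + delta) * discrete_cost P Q t nu + \sum_(q <- Q) slack q * W q)%:E)%E.
Proof.
rewrite (sum_slack_W_plan nu_plan) /discrete_cost mulr_sumr -big_split -sumEFin.
apply: lee_sum => i _.
rewrite integral_edist_pieces ?tau_uncovered // mulr_sumr -big_split -sumEFin /=.
rewrite !big_seq; apply: lee_sum => q Qq.
have -> : (1 + delta) * (nu i q * edist (P i) (t q)) + slack q * nu i q =
          ((1 + delta) * edist (P i) (t q) + slack q) * nu i q by ring.
rewrite EFinM -tau_piece //.
apply: integral_le_cst; first exact: measurable_piece.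
  by apply: measurable_funS (measurable_edist (P i)) => //; exact: measurable_piece.
move=> x px; rewrite edist_ge0 /=; exact: edist_cell_le (disjointify_sub px).
Qed.

Lemma sigma_disc_cost_le i q : q \in Q ->
  ((sigma_disc i q * edist (P i) (t q))%:E <=
   (1 + delta)%:E * \int[sigma i]_(x in piece q) (edist x (P i))%:E +
   (slack q * sigma_disc i q)%:E)%E.
Proof.
move=> Qq; have delta1_gt0 : 0 < 1 + delta by rewrite addr_gt0.
set g := edist (P i) (t q); set c := Num.max 0 (g - slack q) / (1 + delta).
have c_le : (c%:E * sigma i (piece q) <= \int[sigma i]_(x in piece q) (edist x (P i))%:E)%E.
  apply: cst_le_integral; first exact: measurable_piece.
  - by apply: measurable_funS (measurable_edist (P i)) => //; exact: measurable_piece.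
  - by rewrite divr_ge0 ?le_max ?lexx // ltW.
  move=> x px; rewrite ler_pdivrMr // mulrC ge_max mulr_ge0 ?edist_ge0 ?(ltW delta1_gt0) //=.
  exact: edist_cell_ge (disjointify_sub px).
have cost_le : sigma_disc i q * g <= (1 + delta) * (c * sigma_disc i q) + slack q * sigma_disc i q.
  rewrite mulrA [_ * c]mulrC divfK ?gt_eqF // -mulrDl [leLHS]mulrC ler_wpM2r ?fine_ge0 //.
  by rewrite -lerBlDr le_max lexx orbT.
apply: (le_trans (_ : _ <= ((1 + delta) * (c * sigma_disc i q) + slack q * sigma_disc i q)%:E)%E).
  by rewrite lee_fin.
by rewrite EFinD leeD2r // EFinM lee_wpmul2l ?lee_fin ?(ltW delta1_gt0) // EFinM sigma_discE.
Qed.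

Lemma discrete_cost_sigma_le : ((discrete_cost P Q t sigma_disc)%:E <=
  (1 + delta)%:E * plan_cost P sigma + (\sum_(q <- Q) slack q * W q)%:E)%E.
Proof.
rewrite (sum_slack_W_plan discrete_plan_sigma_disc) /discrete_cost /plan_cost -!sumEFin.
rewrite ge0_sume_distrr => [|i _]; last first.
  by apply: integral_ge0 => x _; rewrite lee_fin edist_ge0.
rewrite -big_split /=; apply: lee_sum => i _.
rewrite integral_edist_pieces ?sigma_uncovered // ge0_sume_distrr => [|q _]; last first.
  by apply: integral_ge0 => x _; rewrite lee_fin edist_ge0.
rewrite -!sumEFin -big_split /= !big_seq; apply: lee_sum => q Qq.
exact: sigma_disc_cost_le.
Qed.

Definition near_box k : set Rd :=
  closed_box [tuple tnth (P k) i - rad | i < d] [tuple tnth (P k) i + rad | i < d].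
Definition near := \bigcup_k near_box k.
Definition near_mass := \sum_i fine (sigma i near).

Lemma measurable_near : measurable near.
Proof.
by apply: fin_bigcup_measurable => [|k _]; [exact: finite_finset | exact: measurable_closed_box].
Qed.

Lemma mem_near_box k x : edist x (P k) <= rad -> near_box k x.
Proof.
move=> xk i; have := coord_le_edist x (P k) i; rewrite !tnth_mktuple ler_norml => /andP[? ?].
by apply/andP; split; lra.
Qed.

Lemma near_massE : (near_mass%:E = \sum_(j < m) lam (near `&` hull j))%E.
Proof.
rewrite /near_mass EFin_sum_fine => [|i _]; last by apply: sigma_fin_num; exact: measurable_near.
by apply: sum_sigma; exact: measurable_near.
Qed.

Lemma lam_near_box k : lam (near_box k) = ((2 * rad) ^+ d)%:E.
Proof.
rewrite lamL => [|i]; last by rewrite !tnth_mktuple; have := rad_gt0; lra.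
by rewrite (eq_bigr (fun=> 2 * rad)) ?prodr_const ?card_ord // => i _; rewrite !tnth_mktuple; lra.
Qed.

Lemma near_mass_le : near_mass <= (n * m)%:R * (2 * rad) ^+ d.
Proof.
rewrite -lee_fin near_massE; apply: (@le_trans _ _ (\sum_(j < m) lam near)%E).
  apply: lee_sum => j _; apply: le_measure; rewrite ?inE; last by move=> x [].
  - by apply: measurableI; [exact: measurable_near | exact: measurable_simplex_hull].
  - exact: measurable_near.
have lam_near : (lam near <= (n%:R * (2 * rad) ^+ d)%:E)%E.
  have -> : near = \bigcup_(k in [set` index_enum 'I_n]) near_box k.
    by apply/seteqP; split => x [k _ kx]; exists k; rewrite /= ?mem_index_enum.
  apply: le_trans (measure_bigcup_seq_le _ _ (index_enum_uniq _)) _.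
    by move=> k; exact: measurable_closed_box.
  rewrite (eq_bigr _ (fun k _ => lam_near_box k)) sumEFin sumr_const card_ord lee_fin.
  by rewrite -[_ *+ n]mulr_natl.
apply: (@le_trans _ _ (\sum_(j < m) (n%:R * (2 * rad) ^+ d)%:E)%E); first exact: lee_sum.
rewrite sumEFin sumr_const card_ord lee_fin -[_ *+ m]mulr_natl natrM.
by rewrite mulrCA mulrA.
Qed.

Lemma sum_W_not_ratio_le : \sum_(q <- Q | ~~ ratio_cell q) W q <= near_mass.
Proof.
set Qn := [seq q <- Q | ~~ ratio_cell q].
have Qn_sub : {subset Qn <= Q} by move=> q; rewrite mem_filter => /andP[].
rewrite -lee_fin -big_filter -/Qn -sumEFin near_massE -sum_sigma; last exact: measurable_near.
rewrite big_seq (eq_bigr (fun q => \sum_i sigma i (piece q)))%E => [|q /Qn_sub Qq]; last first.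
  by rewrite sum_sigma_cell.
rewrite -big_seq exchange_big /=; apply: lee_sum => i _.
rewrite -measure_bigcup_seq ?filter_uniq //; last 2 first.
- exact: measurable_piece.
- by apply: (sub_trivIset _ (@trivIset_disjointify _ _ Q cell)) => q /Qn_sub.
apply: le_measure; rewrite ?inE; last 1 first.
- move=> x [q /= Qnq px]; have := Qnq; rewrite mem_filter => /andP[nratio Qq].
  have [k near_k] := slack_cell_near Qq nratio.
  by exists k => //; apply/mem_near_box/near_k/(disjointify_sub px).
- by apply: fin_bigcup_measurable => [|q _]; [exact: finite_seq | exact: measurable_piece].
- exact: measurable_near.
Qed.

Lemma plan_cost_sigma_ge : \sum_i w i = 1 -> ((rad * (1 - near_mass))%:E <= plan_cost P sigma)%E.
Proof.
move=> w_sum1; have m_far : measurable (~` near) by apply: measurableC; exact: measurable_near.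
have w_split i : w i = fine (sigma i near) + fine (sigma i (~` near)).
  apply: EFin_inj; rewrite -sigma_setT -(setUv near).
  rewrite measureU ?setICr //; last exact: measurable_near.
  by rewrite EFinD !fineK // sigma_fin_num //; exact: measurable_near.
have -> : rad * (1 - near_mass) = \sum_i rad * fine (sigma i (~` near)).
  rewrite -mulr_sumr -w_sum1 /near_mass -sumrB; congr (_ * _).
  by apply: eq_bigr => i _; rewrite w_split addrC addKr.
rewrite -sumEFin; apply: lee_sum => i _.
apply: (@le_trans _ _ (\int[sigma i]_(x in ~` near) (edist x (P i))%:E)%E).
  rewrite EFinM fineK ?sigma_fin_num //; apply: cst_le_integral => //; first last.
  - by move=> x far_x; rewrite leNgt; apply: contra_notN far_x => /ltW/mem_near_box x_in; exists i.
  - exact: ltW.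
  - exact: measurable_funS (measurable_edist (P i)).
apply: ge0_subset_integral => //; first exact: measurable_EFin_edist.
by move=> x _; rewrite lee_fin edist_ge0.
Qed.

Lemma sum_slack_W_not_ratio :
  \sum_(q <- Q) slack q * W q = 2 * rad * \sum_(q <- Q | ~~ ratio_cell q) W q.
Proof.
rewrite mulr_sumr [RHS]big_mkcond /=; apply: eq_bigr => q _.
by rewrite /slack; case: ratio_cell; rewrite ?mul0r ?mulr0.
Qed.

Lemma plan_cost_tau_approx : delta <= 1 / 5 -> (n * m)%:R * (2 * rad) ^+ d <= 2 * delta ->
  \sum_i w i = 1 ->
  (forall nu', discrete_plan w Q W nu' -> discrete_cost P Q t nu <= discrete_cost P Q t nu') ->
  (plan_cost P tau <= (1 + 21 * delta)%:E * plan_cost P sigma)%E.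
Proof.
move=> delta_le near_small w_sum1 nu_opt.
have tau_le := plan_cost_tau_le; have sigma_disc_le := discrete_cost_sigma_le.
have sigma_ge := plan_cost_sigma_ge w_sum1; have nu_le := nu_opt _ discrete_plan_sigma_disc.
rewrite sum_slack_W_not_ratio in tau_le sigma_disc_le.
have N_ge0 : 0 <= \sum_(q <- Q | ~~ ratio_cell q) W q by rewrite sumr_ge0 // => q _; exact: W_ge0.
have C_ge0 : (0 <= plan_cost P sigma)%E.
  by rewrite sume_ge0 // => i _; apply: integral_ge0 => x _; rewrite lee_fin edist_ge0.
move: C_ge0 sigma_ge sigma_disc_le; case: (plan_cost P sigma) => [C| |] // C_ge0; last first.
  by move=> _ _; rewrite mulry gtr0_sg ?mul1e ?leey // addr_gt0 // mulr_gt0.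
rewrite -EFinM -EFinD !lee_fin => sigma_ge sigma_disc_le; apply: le_trans tau_le _; rewrite lee_fin.
apply: approx_factor_arith sigma_ge _ => //.
- exact: sum_W_not_ratio_le.
- exact: le_trans near_mass_le near_small.
- exact: le_trans nu_le sigma_disc_le.
Qed.

End TransportBound.

Theorem theorem9 (R : realType) (d n m : nat)
  (lam : {measure set (Rd R d) -> \bar R})
  (P : 'I_n -> Rd R d) (w : 'I_n -> R)
  (S : 'I_m -> 'I_d.+1 -> Rd R d)
  (Delta delta : R) (o : Rd R d)
  (Q : seq (cellidx d)) (t : cellidx d -> Rd R d)
  (nu : 'I_n -> cellidx d -> R)
  (tau : 'I_n -> {measure set (Rd R d) -> \bar R}) :
  (0 < d)%N ->
  is_lebesgue lam ->
  (forall i, 0 < w i) -> \sum_(i < n) w i = 1 ->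
  (forall j, full_dim_simplex (S j)) ->
  (\sum_(j < m) lam (simplex_hull (S j)) = 1)%E ->
  Delta = longest_edge S ->
  0 < delta -> delta <= 1 / 5 ->
  let rad := delta / ((n * m)%:R `^ (d%:R^-1)) in
  uniq Q ->
  (forall c, c \in Q <-> in_Q P S o Delta delta rad c) ->
  (forall q, q \in Q -> grid_cell o Delta q (t q)) ->
  let W := fun q => fine (\sum_(j < m) lam (simplex_hull (S j) `&` grid_cell o Delta q))%E in
  discrete_plan w Q W nu ->
  (forall nu', discrete_plan w Q W nu' ->
     discrete_cost P Q t nu <= discrete_cost P Q t nu') ->
  (forall i A, measurable A ->
     tau i A = (\sum_(q <- Q) ((nu i q / W q)%:E *
                  \sum_(j < m) lam (A `&` simplex_hull (S j) `&` grid_cell o Delta q)))%E) ->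
  forall sigma : 'I_n -> {measure set (Rd R d) -> \bar R},
    transport_plan lam P w S sigma ->
    (plan_cost P tau <= (1 + 21 * delta)%:E * plan_cost P sigma)%E.
Proof.
move=> d_gt0 lamL _ w_sum1 S_full vol1 DeltaE delta_gt0 delta_le rad Q_uniq QE t_in W
  nu_plan nu_opt tauE sigma sigma_plan.
have n_gt0 : (0 < n)%N by apply: (sum_ord_neq0_gt0 (F := w)); rewrite w_sum1 oner_neq0.
have m_gt0 : (0 < m)%N.
  by apply: (sum_ord_neq0_gt0 (F := fun j => lam (simplex_hull (S j)))); rewrite vol1 eqe oner_neq0.
have nm_gt0 : (0 : R) < (n * m)%:R by rewrite ltr0n muln_gt0 n_gt0.
have rad_gt0 : 0 < rad by rewrite divr_gt0 // powR_gt0.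
have near_small : (n * m)%:R * (2 * rad) ^+ d <= 2 * delta.
  have -> : (n * m)%:R * (2 * rad) ^+ d = (2 * delta) ^+ d.
    rewrite !exprMn exprVn (powR_invn_expr (ltW nm_gt0) d_gt0).
    by field; rewrite !pnatr_eq0 -!lt0n m_gt0.
  rewrite -[leRHS]expr1 ler_wiXn2l //; [exact/ltW/mulr_gt0 | lra].
apply: (plan_cost_tau_approx lamL S_full _ delta_gt0 _ rad_gt0 Q_uniq QE nu_plan tauE sigma_plan
  t_in delta_le near_small w_sum1 nu_opt).
- by rewrite DeltaE; exact: longest_edge_gt0.
- by move: delta_le; lra.
Qed.
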